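(* Let $V=(J,(V_j)_{j\in J},d,H)$ be a hypergraph system, let $(\nu_e)_{e\in H}$ be a pseudorandom system of measures on $V$, and let $e\in H$. Let $K$ be a finite set and for each $k\in K$ let $f_k:V_e\to\mathbb{R}$ satisfy $|f_k(x_e)|\le\nu_e(x_e)+1$ for all $x_e\in V_e$. Then $$\Big|\mathbb{E}\Big((\nu_e(x_e)-1)\prod_{k\in K}\mathcal{D}_ef_k(x_e)\ \Big|\ x_e\in V_e\Big)\Big|=o_{N\to\infty;K}(1),$$ where the $o$-term depends only on $|K|$ (and $J$ and the pseudorandomness constants), not on the functions $f_k$.
   Context: A hypergraph system is a quadruple $V=(J,(V_j)_{j\in J},d,H)$ where $J$ is a finite set, each $V_j$ is a finite nonempty set, $d\ge1$ is an integer and $H\subseteq\binom{J}{d}:=\{e\subseteq J:|e|=d\}$; for $e\subseteq J$ put $V_e:=\prod_{j\in e}V_j$. For a finite nonempty set $Z$ and $f:Z\to\mathbb{R}$, $\mathbb{E}(f(x)\mid x\in Z):=|Z|^{-1}\sum_{x\in Z}f(x)$; constraints written after the bar mean uniform averaging over all tuples satisfying them. All objects depend on a parameter $N$ ranging over a sequence tending to infinity while $J,d,H$ are fixed; implicit constants may depend on $J$. $o_{x\to0;y}(X)$ denotes a quantity bounded in magnitude by $c(x,y)X$ where $c(x,y)\to0$ as $x\to0$ for each fixed $y$; $O_y(X)$ a quantity bounded by $C(y)X$. Cube notation: for a finite set $e$, $\{0,1\}^e$ is the set of tuples $\omega=(\omega_j)_{j\in e}$ with $\omega_j\in\{0,1\}$,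 and $0^e$ is the all-zero tuple; for $x^{(0)}_J,x^{(1)}_J\in V_J$, $e\subseteq J$ and $\omega\in\{0,1\}^e$, set $x^{(\omega)}_e:=(x^{(\omega_j)}_j)_{j\in e}\in V_e$ and $x^{(a)}_e:=(x^{(a)}_j)_{j\in e}$ for $a\in\{0,1\}$. A system of measures is a family of functions $\nu_e:V_e\to[0,\infty)$, $e\in H$, with $\mathbb{E}(\nu_e(x_e)\mid x_e\in V_e)=1+o_{N\to\infty}(1)$. For $e\in H$ and $f:V_e\to\mathbb{R}$, the dual function is $\mathcal{D}_ef(x^{(0)}_e):=\mathbb{E}\big(\prod_{\omega\in\{0,1\}^e,\ \omega\neq 0^e}f(x^{(\omega)}_e)\mid x^{(1)}_e\in V_e\big)$. The system is pseudorandom if: (i) $\mathcal{D}_e(\nu_e+1)(x_e)=O(1)$ for all $e\in H$, $x_e\in V_e$; (ii) for every choice of exponents $n_{e,\omega}\in\{0,1\}$, $\mathbb{E}\big(\prod_{e\in H}\prod_{\omega\in\{0,1\}^e}\nu_e(x^{(\omega)}_e)^{n_{e,\omega}}\mid x^{(0)}_J,x^{(1)}_J\in V_J\big)=1+o_{N\to\infty}(1)$; (iii) for every $e\in H$, $j\in e$, every choice of $n_{e,\omega}\in\{0,1\}$ and every integer $K\ge0$, $\mathbb{E}\Big(\mathbb{E}\big(\prod_{\omega\in\{0,1\}^e}\nu_e(x^{(\omega)}_e)^{n_{e,\omega}}\mid x^{(0)}_j,x^{(1)}_j\in V_j\big)^K\ \Big|\ x^{(0)}_{e\setminus\{j\}},x^{(1)}_{e\setminus\{j\}}\in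 V_{e\setminus\{j\}}\Big)=O_K(1)$. *)

From HB Require Import structures.
From mathcomp Require Import all_boot all_order all_algebra.
From mathcomp Require Import reals.
Set Implicit Arguments. Unset Strict Implicit. Unset Printing Implicit Defensive.
Import Order.TTheory GRing.Theory Num.Theory.
Local Open Scope ring_scope.

Section Defs.
Variable R : realType.
Variable J : finType.
(* V N j : the finite vertex set V_j at parameter value N *)
Variable V : nat -> J -> finType.

Definition avg (T : finType) (f : T -> R) : R :=
  (#|T|%:R)^-1 * \sum_(x : T) f x.

Definition Ve (N : nat) (e : {set J}) : finType :=
  {dffun forall i : {j : J | j \in e}, V N (val i)}.

Definition VJ (N : nat) : finType := {dffun forall j : J, V N j}.

Definition cube (e : {set J}) : finType := {ffun {j : J | j \in e} -> bool}.
Definition cube0 (e : {set J}) : cube e := [ffun => false].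

Definition cubept N (e : {set J}) (x0 x1 : Ve N e) (w : cube e) : Ve N e :=
  @finfun _ (fun i : {j : J | j \in e} => V N (val i))
    (fun i => if w i then x1 i else x0 i).

Definition restr N (e : {set J}) (x : VJ N) : Ve N e :=
  @finfun _ (fun i : {j : J | j \in e} => V N (val i)) (fun i => x (val i)).

Lemma in_setD1_of (e : {set J}) (j i : J) : i \in e -> i <> j -> i \in e :\ j.
Proof. by move=> ie /eqP ij; rewrite in_setD1 ij ie. Qed.

Definition glue N (e : {set J}) (j : J) (y : Ve N (e :\ j)) (a : V N j) : Ve N e :=
  @finfun _ (fun i : {k : J | k \in e} => V N (val i))
    (fun i => match val i =P j with
              | ReflectT h => eq_rect j (fun k => V N k) a (val i) (esym h)
              | ReflectF hn => y (exist _ (val i) (in_setD1_of (valP i) hn))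
              end).

Definition dual N (e : {set J}) (f : Ve N e -> R) (x0 : Ve N e) : R :=
  avg (fun x1 : Ve N e => \prod_(w : cube e | w != cube0 e) f (cubept x0 x1 w)).

Definition hypergraph_system (d : nat) (H : {set {set J}}) : Prop :=
  (1 <= d)%N /\ (forall N j, (0 < #|V N j|)%N) /\ (forall e, e \in H -> #|e| = d).

Definition measure_system (H : {set {set J}}) (nu : forall N e, Ve N e -> R) : Prop :=
  (forall N e (x : Ve N e), e \in H -> 0 <= nu N e x) /\
  (forall e, e \in H -> forall eps : R, 0 < eps -> exists N0, forall N, (N0 <= N)%N ->
      `|avg (nu N e) - 1| <= eps).

Definition pseudorandom (H : {set {set J}}) (nu : forall N e, Ve N e -> R) : Prop :=
  (exists C : R, exists N0, forall N, (N0 <= N)%N -> forall e, e \in H ->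
     forall x : Ve N e, `|dual (fun y => nu N e y + 1) x| <= C) /\
  (forall n : forall e : {set J}, cube e -> bool,
     forall eps : R, 0 < eps -> exists N0, forall N, (N0 <= N)%N ->
     `|avg (fun p : VJ N * VJ N =>
          \prod_(e in H) \prod_(w : cube e)
             nu N e (cubept (restr e p.1) (restr e p.2) w) ^+ n e w) - 1| <= eps) /\
  (forall e, e \in H -> forall j, j \in e -> forall n : cube e -> bool, forall K : nat,
     exists C : R, exists N0, forall N, (N0 <= N)%N ->
     `|avg (fun y : Ve N (e :\ j) * Ve N (e :\ j) =>
          (avg (fun a : V N j * V N j =>
             \prod_(w : cube e)
               nu N e (cubept (glue y.1 a.1) (glue y.2 a.2) w) ^+ n w)) ^+ K)| <= C).

End Defs.

From mathcomp Require Import all_boot all_order all_algebra perm.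
From mathcomp Require Import reals.
From mathcomp Require Import ring zify.
Import Order.TTheory GRing.Theory Num.Theory.
Local Open Scope ring_scope.

Set Implicit Arguments. Unset Strict Implicit. Unset Printing Implicit Defensive.

(* Replacing every [V_j] by [|K| + 1] copies of itself turns
   [(nu - 1) * \prod_k D f_k] into a single Gowers inner product over the cube
   [{0,1}^e]: the vertex [0] reads the copy carrying [x_e^(0)], and a vertex
   [w <> 0] reads the product over [k] of the [f_k], each taken in its own copy
   on the coordinates where [w] is [1].  The Gowers-Cauchy-Schwarz inequality
   bounds the [2^|e|]-th power of this inner product by the box norm of
   [nu - 1], which is small by condition (ii), times powers of the inner
   products of the other constant families; since [|f_k| <= nu + 1], each of
   those is bounded, after AM-GM over [k], by the [|K|]-th moments of
   condition (iii). *)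

Lemma prodr_option (R : comPzSemiRingType) (K : finType) (F : option K -> R) :
  \prod_k F k = F None * \prod_(k : K) F (Some k).
Proof.
rewrite (bigD1 None) //=; congr (_ * _).
rewrite (reindex_omap Some (fun o => o)) /=; last by move=> [k|].
by apply: eq_bigl => k; rewrite eqxx.
Qed.

Section Average.
Variable R : realType.
Implicit Types (T A B : finType).

Lemma eq_avg T (f g : T -> R) : f =1 g -> avg f = avg g.
Proof. by move=> fg; rewrite /avg; congr (_ * _); apply: eq_bigr. Qed.

Lemma avg_ge0 T (f : T -> R) : (forall x, 0 <= f x) -> 0 <= avg f.
Proof. by move=> f0; rewrite /avg mulr_ge0 ?invr_ge0 ?ler0n ?sumr_ge0. Qed.

Lemma ler_avg T (f g : T -> R) : (forall x, f x <= g x) -> avg f <= avg g.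
Proof. by move=> fg; rewrite /avg ler_wpM2l ?invr_ge0 ?ler0n ?ler_sum. Qed.

Lemma ler_norm_avg T (f : T -> R) : `|avg f| <= avg (fun x => `|f x|).
Proof.
rewrite /avg normrM ger0_norm ?invr_ge0 ?ler0n //.
by rewrite ler_wpM2l ?invr_ge0 ?ler0n ?ler_norm_sum.
Qed.

Lemma avgD T (f g : T -> R) : avg (fun x => f x + g x) = avg f + avg g.
Proof. by rewrite /avg big_split mulrDr. Qed.

Lemma avgMl T (c : R) (f : T -> R) : avg (fun x => c * f x) = c * avg f.
Proof. by rewrite /avg -mulr_sumr mulrCA. Qed.

Lemma avgMr T (c : R) (f : T -> R) : avg (fun x => f x * c) = avg f * c.
Proof. by rewrite mulrC -avgMl; apply: eq_avg => x; rewrite mulrC. Qed.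

Lemma avg_sumr T (I : finType) (F : I -> T -> R) :
  avg (fun x => \sum_i F i x) = \sum_i avg (F i).
Proof. by rewrite /avg exchange_big mulr_sumr. Qed.

Lemma avg_cst T (c : R) : (0 < #|T|)%N -> avg (fun _ : T => c) = c.
Proof.
move=> T0; rewrite /avg sumr_const -[c *+ _]mulr_natr mulrC mulfK //.
by rewrite pnatr_eq0 -lt0n.
Qed.

Lemma avg_pair A B (F : A * B -> R) :
  avg F = avg (fun a => avg (fun b => F (a, b))).
Proof.
rewrite /avg card_prod natrM invfM -mulrA -mulr_sumr pair_bigA.
by congr (_ * (_ * _)); apply: eq_bigr => -[].
Qed.

Lemma reindex_avg A B (h : A -> B) (F : B -> R) :
  bijective h -> avg (fun a => F (h a)) = avg F.
Proof.
move=> bh; rewrite /avg (bij_eq_card bh) (reindex h) //.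
exact: onW_bij.
Qed.

Lemma exchange_avg A B (F : A -> B -> R) :
  avg (fun a => avg (fun b => F a b)) = avg (fun b => avg (fun a => F a b)).
Proof.
rewrite -(avg_pair (fun p => F p.1 p.2)) -(avg_pair (fun p => F p.2 p.1)).
rewrite -(reindex_avg (fun p : B * A => F p.2 p.1) (h := fun p : A * B => (p.2, p.1))) //.
by exists (fun p : B * A => (p.2, p.1)) => -[].
Qed.

Lemma avg_ffun_prod (I T : finType) (phi : I -> T -> R) :
  avg (fun t : {ffun I -> T} => \prod_i phi i (t i)) = \prod_i avg (phi i).
Proof.
rewrite /avg card_ffun natrX -exprVn -prodr_const big_split /=.
by rewrite bigA_distr_bigA.
Qed.

Lemma avg_CauchySchwarz T (f g : T -> R) :
  avg (fun x => f x * g x) ^+ 2 <= avg (fun x => f x ^+ 2) * avg (fun x => g x ^+ 2).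
Proof.
set a := avg (fun x => f x ^+ 2); set b := avg (fun x => g x ^+ 2).
set c := avg (fun x => f x * g x).
have quad_ge0 t : 0 <= t ^+ 2 * a - 2 * t * c + b.
  have := avg_ge0 (fun x => sqr_ge0 (t * f x - g x)).
  rewrite (eq_avg (g := fun x => t ^+ 2 * f x ^+ 2 + (- (2 * t)) * (f x * g x) + g x ^+ 2)).
    by rewrite !avgD !avgMl mulNr.
  by move=> x; rewrite sqrrB exprMn; ring.
have a0 : 0 <= a by apply: avg_ge0 => x; apply: sqr_ge0.
have [az|anz] := eqVneq a 0.
  suff -> : c = 0 by rewrite az mul0r expr0n.
  apply/eqP; apply: contraT => cnz.
  have := quad_ge0 ((b + 1) / (2 * c)); rewrite az.
  have -> : ((b + 1) / (2 * c)) ^+ 2 * 0 - 2 * ((b + 1) / (2 * c)) * c + b = -1.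
    by field; rewrite cnz.
  by rewrite ler0N1.
have apos : 0 < a by rewrite lt_def anz a0.
have := quad_ge0 (c / a).
have -> : (c / a) ^+ 2 * a - 2 * (c / a) * c + b = b - c ^+ 2 / a by field.
by rewrite subr_ge0 ler_pdivrMr // mulrC.
Qed.

Lemma avg_ffun_prod_Some (K T : finType) (phi : K -> T -> R) : (0 < #|T|)%N ->
  avg (fun a : {ffun option K -> T} => \prod_k phi k (a (Some k))) = \prod_k avg (phi k).
Proof.
move=> T0; have := avg_ffun_prod (fun k => if k is Some k then phi k else fun _ => 1).
rewrite prodr_option avg_cst // mul1r => <-.
by apply: eq_avg => a; rewrite prodr_option mul1r.
Qed.

End Average.

Section Glue.
Variables (J : finType) (V : nat -> J -> finType) (N : nat) (e : {set J}).
Variable i : {k : J | k \in e}.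
Local Notation j := (val i).

Lemma in_setD1_sub (k : J) : k \in e :\ j -> k \in e.
Proof. exact: (subsetP (subD1set e j)). Qed.

Definition widen_idx (k : {k : J | k \in e :\ j}) : {k : J | k \in e} :=
  exist _ (val k) (in_setD1_sub (valP k)).

Definition restrD1 (x : Ve V N e) : Ve V N (e :\ j) :=
  @finfun _ (fun k : {k : J | k \in e :\ j} => V N (val k)) (fun k => x (widen_idx k)).

Lemma glue_at (y : Ve V N (e :\ j)) (a : V N j) : glue y a i = a.
Proof.
move: y a; case: i => k hk y a; rewrite /glue ffunE /=.
by case: eqP => // h; rewrite [h]eq_axiomK.
Qed.

Lemma glue_ne (y : Ve V N (e :\ j)) (a : V N j) (k : J) (hk : k \in e) (hn : k <> j) :
  glue y a (exist _ k hk) = y (exist _ k (in_setD1_of hk hn)).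
Proof.
rewrite /glue ffunE /=; case: eqP => // hn'.
by rewrite (bool_irrelevance (in_setD1_of _ hn') (in_setD1_of _ hn)).
Qed.

Lemma glue_restrD1 (x : Ve V N e) : glue (restrD1 x) (x i) = x.
Proof.
apply/ffunP => k; case: (eqVneq k i) => [->|/eqP kn]; first by rewrite glue_at.
case: k kn => k hk kn; have {}kn : k <> j by move=> kj; apply: kn; apply: val_inj.
by rewrite glue_ne ffunE /= /widen_idx (bool_irrelevance (in_setD1_sub _) hk).
Qed.

Lemma restrD1_glue (y : Ve V N (e :\ j)) (a : V N j) : restrD1 (glue y a) = y.
Proof.
apply/ffunP => -[k hk]; rewrite ffunE /=.
have kn : k <> j by move=> kj; move: hk; rewrite kj in_setD1 eqxx.
by rewrite glue_ne (bool_irrelevance (in_setD1_of _ kn) hk).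
Qed.

Lemma glue_bij : bijective (fun p : Ve V N (e :\ j) * V N j => glue p.1 p.2).
Proof.
exists (fun x => (restrD1 x, x i)) => [[y a]|x] /=; last exact: glue_restrD1.
by rewrite restrD1_glue glue_at.
Qed.

Definition cube_restrD1 (w : cube e) : cube (e :\ j) :=
  [ffun k => w (widen_idx k)].

Lemma cubept_glue (y0 y1 : Ve V N (e :\ j)) (a0 a1 : V N j) (w : cube e) :
  cubept (glue y0 a0) (glue y1 a1) w =
  glue (cubept y0 y1 (cube_restrD1 w)) (if w i then a1 else a0).
Proof.
apply/ffunP => k; case: (eqVneq k i) => [->|/eqP kn].
  by rewrite glue_at ffunE; case: (w i); rewrite glue_at.
case: k kn => k hk kn; have {}kn : k <> j by move=> kj; apply: kn; apply: val_inj.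
rewrite ffunE /= !glue_ne !ffunE /= /widen_idx.
by rewrite (bool_irrelevance (in_setD1_sub _) hk).
Qed.

End Glue.

Section Box.
Variables (R : realType) (J : finType) (V : nat -> J -> finType) (N : nat) (e : {set J}).
Local Notation X := (Ve V N e).
Local Notation idx := {k : J | k \in e}.
Implicit Types (w : cube e) (i : idx) (b c : bool).

Lemma cubept0 (x0 x1 : X) : cubept x0 x1 (cube0 e) = x0.
Proof. by apply/ffunP => i; rewrite !ffunE. Qed.

Definition box (F : cube e -> X -> R) : R :=
  avg (fun p : X * X => \prod_(w : cube e) F w (cubept p.1 p.2 w)).

Definition cube_set w i b : cube e :=
  [ffun k => if k == i then b else w k].

Lemma cube_set_at w i b : cube_set w i b i = b.
Proof. by rewrite ffunE eqxx. Qed.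

Lemma cube_set_id w i b : w i = b -> cube_set w i b = w.
Proof. by move=> wi; apply/ffunP => k; rewrite ffunE; case: eqP => // ->. Qed.

Lemma cube_setK w i b c : cube_set (cube_set w i c) i b = cube_set w i b.
Proof. by apply/ffunP => k; rewrite !ffunE; case: eqP. Qed.

Lemma cube_restrD1_set w i b : cube_restrD1 i (cube_set w i b) = cube_restrD1 i w.
Proof.
apply/ffunP => -[k hk]; rewrite !ffunE /=; case: eqP => // /(congr1 val) /= ki.
by exfalso; move: hk; rewrite ki in_setD1 eqxx.
Qed.

Lemma eq_box (F G : cube e -> X -> R) : (forall w, F w =1 G w) -> box F = box G.
Proof. by move=> FG; apply: eq_avg => p; apply: eq_bigr => w _; rewrite FG. Qed.

Variable i : idx.
Local Notation j := (val i).
Local Notation Y := (Ve V N (e :\ j)).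

Definition face_prod (F : cube e -> X -> R) (b : bool) (y : Y * Y) (a : V N j) : R :=
  \prod_(w : cube e | w i == b) F w (glue (cubept y.1 y.2 (cube_restrD1 i w)) a).

Lemma avg_glue (Phi : X -> R) : avg Phi = avg (fun y : Y => avg (fun a => Phi (glue y a))).
Proof. by rewrite -(reindex_avg Phi (glue_bij V N i)) avg_pair. Qed.

Lemma box_split F :
  box F = avg (fun y => avg (fun a => face_prod F false y a) * avg (fun a => face_prod F true y a)).
Proof.
rewrite /box avg_pair; under eq_avg => p0 do rewrite avg_glue.
rewrite avg_glue avg_pair; apply: eq_avg => y0; rewrite exchange_avg.
apply: eq_avg => y1 /=; rewrite -avgMr; apply: eq_avg => a0; rewrite -avgMl.
apply: eq_avg => a1; rewrite (bigID (fun w : cube e => w i)) mulrC /face_prod.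
congr (_ * _); apply: eq_big => w; rewrite ?eqbF_neg ?eqb_id //= => wi;
  by rewrite cubept_glue ?wi // (negbTE wi).
Qed.

Lemma face_prod_set F b b' y a :
  face_prod (fun w => F (cube_set w i b)) b' y a = face_prod F b y a.
Proof.
pose toggle w := cube_set w i (w i (+) (b (+) b')).
have toggleK : involutive toggle.
  by move=> w; rewrite /toggle cube_setK cube_set_at addbK cube_set_id.
have toggle_face w : (toggle w i == b') = (w i == b).
  by rewrite cube_set_at; case: (w i) (b) (b') => [] [] [].
rewrite /face_prod (reindex_inj (inv_inj toggleK)) /=.
apply: eq_big => w; rewrite toggle_face // => /eqP wi.
by rewrite cube_setK cube_restrD1_set cube_set_id.
Qed.

Lemma box_sqr_le F :
  box F ^+ 2 <= box (fun w => F (cube_set w i false)) * box (fun w => F (cube_set w i true)).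
Proof.
rewrite !box_split; under [Z in _ <= Z * _]eq_avg => y do rewrite !(eq_avg (face_prod_set F _ _ _)) -expr2.
under [Z in _ <= _ * Z]eq_avg => y do rewrite !(eq_avg (face_prod_set F _ _ _)) -expr2.
exact: avg_CauchySchwarz.
Qed.

End Box.

Section GowersCauchySchwarz.
Variables (R : realType) (J : finType) (V : nat -> J -> finType) (N : nat) (e : {set J}).
Local Notation X := (Ve V N e).
Local Notation idx := {k : J | k \in e}.
Implicit Types (t w : cube e) (i : idx) (b : bool).

Definition cube_merge (js : seq idx) (t w : cube e) : cube e :=
  [ffun k => if k \in js then t k else w k].

Lemma cube_merge_nil t w : cube_merge [::] t w = w.
Proof. by apply/ffunP => k; rewrite ffunE. Qed.

Lemma cube_merge_enum t w : cube_merge (enum {: idx}) t w = t.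
Proof. by apply/ffunP => k; rewrite ffunE mem_enum. Qed.

Lemma cube_set_merge js t w i b :
  cube_set (cube_merge js t w) i b = cube_merge (i :: js) (cube_set t i b) w.
Proof. by apply/ffunP => k; rewrite !ffunE inE; case: eqP. Qed.

(* Each application of [box_sqr_le] freezes one more coordinate of the cube. *)
Lemma box_GCS_seq js (F : cube e -> X -> R) (C : R) : 0 <= C ->
  (forall t, `|box (fun w => F (cube_merge js t w))| <= C) ->
  `|box F| ^+ (2 ^ size js) <=
    `|box (fun w => F (cube_merge js (cube0 e) w))| * C ^+ (2 ^ size js).-1.
Proof.
elim: js F => [|i js IH] F C0 FC /=.
  by rewrite expr1 mulr1 (eq_box (G := F)) // => w x; rewrite cube_merge_nil.
pose Fb b w := F (cube_set w i b).
have IHb b : `|box (Fb b)| ^+ (2 ^ size js) <=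
    `|box (fun w => F (cube_merge (i :: js) (cube_set (cube0 e) i b) w))| * C ^+ (2 ^ size js).-1.
  have frozen t : box (fun w => Fb b (cube_merge js t w)) =
      box (fun w => F (cube_merge (i :: js) (cube_set t i b) w)).
    by apply: eq_box => w x; rewrite /Fb cube_set_merge.
  by rewrite -frozen; apply: IH => // t; rewrite frozen.
have sqr_le : `|box F| ^+ 2 <= `|box (Fb false)| * `|box (Fb true)|.
  rewrite real_normK ?num_real // -normrM; exact: le_trans (box_sqr_le i F) (ler_norm _).
have [k Ek] : exists k, (2 ^ size js = k.+1)%N by exists (2 ^ size js).-1; rewrite prednK ?expn_gt0.
rewrite Ek /= in IHb; rewrite expnS Ek exprM.
have -> : (2 * k.+1).-1 = (k + k.+1)%N by lia.
apply: le_trans (lerXn2r k.+1 _ _ sqr_le) _; rewrite ?nnegrE ?mulr_ge0 //.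
rewrite exprMn; apply: le_trans (ler_pM _ _ (IHb false) (IHb true)) _; rewrite ?exprn_ge0 //.
rewrite [cube_set _ _ false]cube_set_id ?ffunE // -mulrA ler_wpM2l // exprD exprS.
by rewrite ler_wpM2l ?exprn_ge0 // ler_wpM2r ?exprn_ge0.
Qed.

Lemma box_GCS (F : cube e -> X -> R) (delta C : R) : 0 <= C ->
  `|box (fun _ => F (cube0 e))| <= delta -> (forall t, `|box (fun _ => F t)| <= C) ->
  `|box F| ^+ (2 ^ #|{: idx}|) <= delta * C ^+ (2 ^ #|{: idx}|).-1.
Proof.
move=> C0 Fdelta FC; have merge_enum t : box (fun w => F (cube_merge (enum {: idx}) t w)) = box (fun _ => F t).
  by apply: eq_box => w x; rewrite cube_merge_enum.
rewrite cardE; apply: le_trans (box_GCS_seq C0 _) _; first by move=> t; rewrite merge_enum.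
by rewrite merge_enum ler_wpM2r ?exprn_ge0.
Qed.

End GowersCauchySchwarz.

Lemma card_Ve_gt0 (J : finType) (V : nat -> J -> finType) N (e : {set J}) :
  (forall j, 0 < #|V N j|)%N -> (0 < #|Ve V N e|)%N.
Proof.
move=> Vne; apply/card_gt0P.
by exists (@finfun _ (fun i : {k : J | k \in e} => V N (val i))
          (fun i => enum_val (Ordinal (Vne (val i))))).
Qed.

Section Copies.
Variables (R : realType) (J : finType) (V : nat -> J -> finType) (N : nat) (K : finType).
Hypothesis Vne : forall j, (0 < #|V N j|)%N.

(* A point of [Ve Vcopies N e] is a family, indexed by [option K], of points of
   [Ve V N e]; [copy c u] reads the coordinate [i] of [u] in the copy [c i]. *)
Definition Vcopies : nat -> J -> finType := fun _ j => {ffun option K -> V N j}.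

Lemma Vcopies_gt0 j : (0 < #|Vcopies N j|)%N.
Proof. by rewrite card_ffun expn_gt0 Vne. Qed.

Variable e : {set J}.
Local Notation X := (Ve V N e).
Local Notation U := (Ve Vcopies N e).
Local Notation idx := {k : J | k \in e}.

Definition copy (c : idx -> option K) (u : U) : X :=
  @finfun _ (fun i : idx => V N (val i)) (fun i => (u i : {ffun option K -> V N (val i)}) (c i)).

Definition copies (u : U) : {ffun option K -> X} := [ffun k => copy (fun _ => k) u].

Lemma copies_bij : bijective copies.
Proof.
exists (fun t : {ffun option K -> X} => @finfun _ (fun i : idx => Vcopies N (val i)) (fun i => [ffun k => t k i])).
  by move=> u; apply/ffunP => i; apply/ffunP => k; rewrite !ffunE.
by move=> t; apply/ffunP => k; apply/ffunP => i; rewrite !ffunE.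
Qed.

Lemma avg_prod_copies (Phi : option K -> X -> R) :
  avg (fun u : U => \prod_k Phi k (copy (fun _ => k) u)) = \prod_k avg (Phi k).
Proof.
rewrite -avg_ffun_prod -(reindex_avg (fun t : {ffun option K -> X} => \prod_k Phi k (t k)) copies_bij).
by apply: eq_avg => u; apply: eq_bigr => k _; rewrite ffunE.
Qed.

(* Each single copy is uniformly distributed: transpose copy [c i] with copy [None]. *)
Lemma avg_copy c (Phi : X -> R) : avg (fun u : U => Phi (copy c u)) = avg Phi.
Proof.
pose swap (u : U) : U := @finfun _ (fun i : idx => Vcopies N (val i))
  (fun i => [ffun k => (u i : {ffun option K -> V N (val i)}) (tperm None (c i) k)]).
have swapK : involutive swap by move=> u; apply/ffunP => i; apply/ffunP => k; rewrite !ffunE tpermK.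
have copy_swap u : copy c u = copy (fun _ => None) (swap u).
  by apply/ffunP => i; rewrite !ffunE tpermL.
rewrite (eq_avg (fun u => congr1 Phi (copy_swap u))) (reindex_avg (fun u => Phi (copy (fun _ => None) u)) (inv_bij swapK)).
have := avg_prod_copies (fun k => if k is None then Phi else fun _ => 1).
rewrite prodr_option big1 ?mulr1 => [<-|k _]; last by rewrite avg_cst // card_Ve_gt0.
by apply: eq_avg => u; rewrite prodr_option big1 ?mulr1.
Qed.

Lemma copy_cubept c (u0 u1 : U) (w : cube e) :
  copy c (cubept u0 u1 w) = cubept (copy c u0) (copy c u1) w.
Proof. by apply/ffunP => i; rewrite !ffunE; case: (w i). Qed.

End Copies.

Lemma prodr_le_1Dsum_exp (R : realDomainType) (I : finType) (F : I -> R) :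
  (forall i, 0 <= F i) -> \prod_i F i <= 1 + \sum_i F i ^+ #|I|.
Proof.
move=> F0; have [i0 _|I0] := pickP (@predT I); last by rewrite !big_pred0 // addr0.
have [i1 _ Fmax] := @arg_maxP _ _ I i0 predT F erefl.
apply: (le_trans (y := F i1 ^+ #|I|)).
  by rewrite -prodr_const; apply: ler_prod => i _; rewrite F0; exact: Fmax.
rewrite (bigD1 i1) //= addrCA lerDl addr_ge0 ?ler01 ?sumr_ge0 // => i _.
exact: exprn_ge0.
Qed.

Section FaceAverage.
Variables (R : realType) (J : finType) (V : nat -> J -> finType) (N : nat) (e : {set J}).
Local Notation X := (Ve V N e).

Definition cube_prod (h : X -> R) (x0 x1 : X) : R := \prod_(w : cube e) h (cubept x0 x1 w).

Definition face_avg (i : {k : J | k \in e}) (h : X -> R) :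
    Ve V N (e :\ val i) * Ve V N (e :\ val i) -> R :=
  fun z => avg (fun b : V N (val i) * V N (val i) => cube_prod h (glue z.1 b.1) (glue z.2 b.2)).

End FaceAverage.

Arguments face_avg {R J V N e} i h.

Section DualFamily.
Variables (R : realType) (J : finType) (V : nat -> J -> finType) (N : nat) (K : finType).
Hypothesis Vne : forall j, (0 < #|V N j|)%N.
Variable e : {set J}.
Local Notation X := (Ve V N e).
Local Notation U := (Ve (Vcopies V N K) N e).
Local Notation idx := {k : J | k \in e}.

Lemma copy_glue (i : idx) (c : idx -> option K)
    (y : Ve (Vcopies V N K) N (e :\ val i)) (a : {ffun option K -> V N (val i)}) :
  copy c (glue y a : U) = glue (copy (fun k => c (widen_idx k)) y) (a (c i)).
Proof.
apply/ffunP => k; case: (eqVneq k i) => [->|/eqP kn].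
  by rewrite ffunE !glue_at.
case: k kn => k hk kn; have {}kn : k <> val i by move=> ki; apply: kn; apply: val_inj.
rewrite ffunE !glue_ne ffunE /= /widen_idx.
by rewrite (bool_irrelevance (in_setD1_sub _) hk).
Qed.

(* The copies [Some k] at coordinate [i] are independent, so the average over
   coordinate [i] factorises over [k]. *)
Lemma avg_prod_copies_glue (i : idx) (c : K -> idx -> option K) (Phi : K -> X -> X -> R) :
  (forall k, c k i = Some k) ->
  avg (fun p : U * U => \prod_k Phi k (copy (c k) p.1) (copy (c k) p.2)) =
  avg (fun y1 => avg (fun y2 => \prod_k avg (fun b : V N (val i) * V N (val i) =>
    Phi k (glue (copy (fun l => c k (widen_idx l)) y1) b.1)
          (glue (copy (fun l => c k (widen_idx l)) y2) b.2)))).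
Proof.
move=> cSome; rewrite avg_pair [LHS](avg_glue (V := Vcopies V N K) i).
apply: eq_avg => y1; rewrite exchange_avg [LHS](avg_glue (V := Vcopies V N K) i).
apply: eq_avg => y2; rewrite exchange_avg.
under eq_avg => a1 do under eq_avg => a2 do under eq_bigr => k _ do rewrite !copy_glue cSome.
under eq_avg => a1 do rewrite (avg_ffun_prod_Some (fun k b2 =>
  Phi k (glue (copy (fun l => c k (widen_idx l)) y1) (a1 (Some k)))
        (glue (copy (fun l => c k (widen_idx l)) y2) b2)) (Vne _)).
rewrite (avg_ffun_prod_Some (fun k b1 => avg (fun b2 =>
  Phi k (glue (copy (fun l => c k (widen_idx l)) y1) b1)
        (glue (copy (fun l => c k (widen_idx l)) y2) b2))) (Vne _)).
by apply: eq_bigr => k _; rewrite avg_pair.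
Qed.

Variables (g : X -> R) (f : K -> X -> R).

Definition dual_family (w : cube e) (u : U) : R :=
  if w == cube0 e then g (copy (fun _ => None) u)
  else \prod_k f k (copy (fun i => if w i then Some k else None) u).

Lemma box_dual_family : box dual_family = avg (fun x => g x * \prod_k dual (f k) x).
Proof.
rewrite /box avg_pair -(avg_copy (K := K) Vne (fun _ => None) (fun x => g x * \prod_k dual (f k) x)).
apply: eq_avg => u0; set x0 := copy _ u0.
have -> : \prod_k dual (f k) x0 = avg (fun u1 : U =>
    \prod_k \prod_(w | w != cube0 e) f k (cubept x0 (copy (fun _ => Some k) u1) w)).
  have := avg_prod_copies (fun k => if k is Some k
    then fun y => \prod_(w | w != cube0 e) f k (cubept x0 y w) else fun _ => 1).
  rewrite prodr_option avg_cst ?card_Ve_gt0 // mul1r => <-.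
  by apply: eq_avg => u1; rewrite prodr_option mul1r.
rewrite -avgMl; apply: eq_avg => u1 /=.
rewrite (bigD1 (cube0 e)) //= /dual_family eqxx cubept0; congr (_ * _).
rewrite [RHS]exchange_big /=; apply: eq_bigr => w /negbTE ->; apply: eq_bigr => k _.
by congr (f k); apply/ffunP => i; rewrite !ffunE; case: (w i).
Qed.

Lemma box_dual_family_cube0 : box (fun _ => dual_family (cube0 e)) = box (fun _ => g).
Proof.
rewrite /box /dual_family eqxx !avg_pair.
rewrite -(avg_copy (K := K) Vne (fun _ => None) (fun x1 => avg (fun x2 => \prod_w g (cubept x1 x2 w)))).
apply: eq_avg => u1 /=.
rewrite -(avg_copy (K := K) Vne (fun _ => None) (fun x2 => \prod_w g (cubept (copy (fun _ => None) u1) x2 w))).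
by apply: eq_avg => u2 /=; apply: eq_bigr => w _; rewrite copy_cubept.
Qed.

Lemma norm_box_dual_family_le (t : cube e) (i : idx) (h : X -> R) :
  t i -> (forall x, 0 <= h x) -> (forall k x, `|f k x| <= h x) ->
  `|box (fun _ => dual_family t)| <= 1 + #|K|%:R * avg (fun z => face_avg i h z ^+ #|K|).
Proof.
move=> ti h0 fh; pose c (k : K) (l : idx) := if t l then Some k else None.
pose c' (k : K) (l : {k : J | k \in e :\ val i}) := c k (widen_idx l).
have t_neq0 : t != cube0 e by apply: contraTneq ti => ->; rewrite ffunE.
apply: (@le_trans _ _ (avg (fun p : U * U =>
    \prod_k cube_prod h (copy (c k) p.1) (copy (c k) p.2)))).
  apply: le_trans (ler_norm_avg _) _; apply: ler_avg => p.
  rewrite normr_prod /dual_family (negbTE t_neq0) /cube_prod [Z in _ <= Z]exchange_big /=.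
  apply: ler_prod => w _; rewrite normr_ge0 normr_prod; apply: ler_prod => k _.
  by rewrite normr_ge0 copy_cubept; apply: fh.
rewrite (avg_prod_copies_glue (i := i) (c := c) (fun _ => cube_prod h)) => [|k]; last by rewrite /c ti.
apply: (@le_trans _ _ (avg (fun y1 => avg (fun y2 =>
    1 + \sum_k face_avg i h (copy (c' k) y1, copy (c' k) y2) ^+ #|K|)))).
  apply: ler_avg => y1; apply: ler_avg => y2; apply: prodr_le_1Dsum_exp => k.
  by apply: avg_ge0 => b; apply: prodr_ge0.
have VD1_gt0 := card_Ve_gt0 (e :\ val i) (Vcopies_gt0 K Vne).
under eq_avg => y1 do rewrite avgD avg_cst // avg_sumr.
rewrite avgD avg_cst // avg_sumr lerD2l.
rewrite (eq_bigr (fun _ => avg (fun z => face_avg i h z ^+ #|K|))) => [|k _].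
  by rewrite sumr_const mulr_natl.
rewrite avg_pair -(avg_copy Vne (c' k) (fun z1 => avg (fun z2 => face_avg i h (z1, z2) ^+ #|K|))).
apply: eq_avg => y1.
by rewrite -(avg_copy Vne (c' k) (fun z2 => face_avg i h (copy (c' k) y1, z2) ^+ #|K|)).
Qed.

End DualFamily.

Section Restriction.
Variables (R : realType) (J : finType) (V : nat -> J -> finType) (N : nat).
Hypothesis Vne : forall j, (0 < #|V N j|)%N.
Variable e : {set J}.
Local Notation X := (Ve V N e).

Definition extend_at (y : X) (x : VJ V N) (j : J) : V N j :=
  (if j \in e as b return (j \in e = b -> V N j) then fun h => y (exist _ j h) else fun _ => x j)
  (erefl (j \in e)).

Lemma extend_at_in y x j (h : j \in e) : extend_at y x j = y (exist _ j h).
Proof.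
rewrite /extend_at; move: (erefl (j \in e)); case: {2 3}(j \in e) => h'.
  by rewrite (bool_irrelevance h' h).
by exfalso; move: (h); rewrite h'.
Qed.

Lemma extend_at_out y x j : j \notin e -> extend_at y x j = x j.
Proof.
move=> h; rewrite /extend_at; move: (erefl (j \in e)); case: {2 3}(j \in e) => // h'.
by exfalso; move: h; rewrite h'.
Qed.

Definition extend (y : X) (x : VJ V N) : VJ V N := @finfun J (fun j => V N j) (extend_at y x).

Lemma restr_extend y x : restr e (extend y x) = y.
Proof. by apply/ffunP => -[j h]; rewrite !ffunE /= extend_at_in. Qed.

Lemma extend_restr x : extend (restr e x) x = x.
Proof.
apply/ffunP => j; rewrite ffunE; have [h|h] := boolP (j \in e).
  by rewrite extend_at_in ffunE.
by rewrite extend_at_out.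
Qed.

Lemma extend_extend y y' x : extend y (extend y' x) = extend y x.
Proof.
apply/ffunP => j; rewrite !ffunE; have [h|h] := boolP (j \in e).
  by rewrite !extend_at_in.
by rewrite !extend_at_out // ffunE extend_at_out.
Qed.

Lemma card_restr_fiber_le (y y' : X) :
  (#|[set x | restr e x == y]| <= #|[set x | restr e x == y']|)%N.
Proof.
rewrite -(@card_in_imset _ _ (extend y')); last first.
  move=> x1 x2; rewrite !inE => /eqP h1 /eqP h2 E.
  by rewrite -(extend_restr x1) -(extend_restr x2) h1 h2 -(extend_extend y y' x1) E extend_extend.
apply: subset_leq_card; apply/subsetP => x /imsetP [x' _ ->].
by rewrite inE restr_extend.
Qed.

(* All fibres of [restr e] have the same size. *)
Lemma avg_restr (Phi : X -> R) : avg (fun x : VJ V N => Phi (restr e x)) = avg Phi.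
Proof.
have x0 : VJ V N := @finfun J (fun j => V N j) (fun j => enum_val (Ordinal (Vne j))).
set c := #|[set x | restr e x == restr e x0]|.
have fiber_c (y : X) : #|[set x | restr e x == y]| = c.
  by apply/eqP; rewrite eqn_leq /c !card_restr_fiber_le.
have partition (F : X -> R) : \sum_(x : VJ V N) F (restr e x) = \sum_(y : X) c%:R * F y.
  rewrite (partition_big (restr e) predT) //=; apply: eq_bigr => y _.
  rewrite (eq_bigr (fun _ => F y)) => [|x /eqP -> //].
  by rewrite sumr_const -(fiber_c y) cardsE mulr_natl.
have cardVJ : #|VJ V N| = (#|X| * c)%N.
  rewrite -sum1_card (partition_big (restr e) predT) //=.
  have -> : (#|X| * c)%N = \sum_(y : X) c by rewrite sum_nat_const.
  by apply: eq_bigr => y _; rewrite sum1_card -(fiber_c y) cardsE.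
have c_gt0 : (0 < c)%N.
  by move: (max_card (pred1 x0)); rewrite card1 cardVJ muln_gt0 => /andP[].
rewrite /avg cardVJ natrM invfM -mulrA partition; congr (_ * _).
by rewrite -mulr_sumr mulrA mulVf ?mul1r // pnatr_eq0 -lt0n.
Qed.

End Restriction.

Lemma eventually_forall_fin (T : finType) (P : T -> nat -> Prop) :
  (forall t, exists N0, forall N, (N0 <= N)%N -> P t N) ->
  exists N0, forall t N, (N0 <= N)%N -> P t N.
Proof.
move=> evP; suff [N0 PN0] : exists N0, forall t, t \in enum T -> forall N, (N0 <= N)%N -> P t N.
  by exists N0 => t N; apply: PN0; rewrite mem_enum.
elim: (enum T) => [|a s [N1 PN1]]; first by exists 0%N.
have [N2 PN2] := evP a; exists (maxn N1 N2) => t.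
rewrite inE => /orP[/eqP ->|ts] N; rewrite geq_max => /andP[N1N N2N]; first exact: PN2.
exact: PN1.
Qed.

Lemma eventually_bounded_fin (R : realDomainType) (T : finType) (X : T -> nat -> R) :
  (forall t, exists C : R, exists N0, forall N, (N0 <= N)%N -> X t N <= C) ->
  exists C : R, exists N0, forall t N, (N0 <= N)%N -> X t N <= C.
Proof.
move=> bX; suff [C [N0 XC]] : exists C : R, exists N0,
    forall t, t \in enum T -> forall N, (N0 <= N)%N -> X t N <= C.
  by exists C, N0 => t N; apply: XC; rewrite mem_enum.
elim: (enum T) => [|a s [C1 [N1 XC1]]]; first by exists 0, 0%N.
have [C2 [N2 XC2]] := bX a; exists (Num.max C1 C2), (maxn N1 N2) => t.
rewrite inE => /orP[/eqP ->|ts] N; rewrite geq_max le_max => /andP[N1N N2N].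
  by rewrite XC2 ?orbT.
by rewrite XC1.
Qed.

Lemma exprn_sum_le (R : realDomainType) (I : finType) (i0 : I) (a : I -> R) (m : nat) :
  (forall i, 0 <= a i) -> (\sum_i a i) ^+ m <= #|I|%:R ^+ m * \sum_i a i ^+ m.
Proof.
move=> a0; have [i1 _ amax] := @arg_maxP _ _ I i0 predT a erefl.
apply: (@le_trans _ _ ((#|I|%:R * a i1) ^+ m)).
  rewrite lerXn2r ?nnegrE ?mulr_ge0 ?sumr_ge0 //.
  by rewrite mulr_natl -sumr_const; apply: ler_sum => i _; exact: amax.
rewrite exprMn ler_wpM2l ?exprn_ge0 // (bigD1 i1) //= lerDl.
by apply: sumr_ge0 => i _; exact: exprn_ge0.
Qed.

Lemma prodrDr_expand (R : comPzSemiRingType) (T : finType) (a : T -> R) (c : R) :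
  \prod_t (a t + c) = \sum_(n : {ffun T -> bool}) \prod_t (if n t then a t else c).
Proof.
rewrite -(bigA_distr_bigA (fun t (b : bool) => if b then a t else c)) /=.
by apply: eq_bigr => t _; rewrite big_bool.
Qed.

Section Pseudorandom.
Variables (R : realType) (J : finType) (V : nat -> J -> finType) (H : {set {set J}}).
Variable nu : forall N (e : {set J}), Ve V N e -> R.
Arguments nu : clear implicits.
Hypothesis Vne : forall N j, (0 < #|V N j|)%N.
Hypothesis nu_pr : pseudorandom H nu.
Variable e : {set J}.
Hypothesis eH : e \in H.
Hypothesis nu_ge0 : forall N (x : Ve V N e), 0 <= nu N e x.
Local Notation X N := (Ve V N e).
Local Notation idx := {k : J | k \in e}.

Definition cube_cast (e' : {set J}) (w : cube e') : cube e :=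
  [ffun i : idx => if insub (val i) is Some i' then w i' else false].

Lemma cube_cast_id (w : cube e) : cube_cast w = w.
Proof. by apply/ffunP => i; rewrite ffunE valK. Qed.

Definition cube_moment N (n : cube e -> bool) : R :=
  avg (fun p : X N * X N => \prod_(w : cube e) nu N e (cubept p.1 p.2 w) ^+ n w).

(* Condition (ii) with all exponents outside [e] equal to zero. *)
Lemma cube_moment_eventually n (delta : R) : 0 < delta ->
  exists N0, forall N, (N0 <= N)%N -> `|cube_moment N n - 1| <= delta.
Proof.
have [_ [pr_ii _]] := nu_pr; move=> /(pr_ii (fun e' w => (e' == e) && n (cube_cast w))) [N0 ii].
exists N0 => N /ii; congr (`|_ - 1| <= _).
rewrite /cube_moment !avg_pair.
rewrite -(avg_restr (Vne N) (fun y1 => avg (fun y2 => \prod_w nu N e (cubept y1 y2 w) ^+ n w))).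
apply: eq_avg => x1.
rewrite -(avg_restr (Vne N) (fun y2 => \prod_w nu N e (cubept (restr e x1) y2 w) ^+ n w)).
apply: eq_avg => x2 /=; rewrite (bigD1 e) //= [Z in _ * Z]big1 ?mulr1 => [|e' /andP[_ /negbTE ->]].
  by apply: eq_bigr => w _; rewrite eqxx cube_cast_id.
by apply: big1 => w _; exact: expr0.
Qed.

Lemma box_nu_sub1_small (delta : R) : 0 < delta ->
  exists N0, forall N, (N0 <= N)%N -> `|box (fun _ => fun x : X N => nu N e x - 1)| <= delta.
Proof.
pose sign (n : cube e -> bool) : R := \prod_w (if n w then 1 else -1).
pose cn : R := #|{ffun cube e -> bool}|%:R.
have cn_gt0 : 0 < cn by rewrite ltr0n; apply/card_gt0P; exists [ffun => false].
move=> delta_gt0; have [N0 moment1] := eventually_forall_fin (fun n : {ffun cube e -> bool} =>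
  cube_moment_eventually n (divr_gt0 delta_gt0 cn_gt0)).
exists N0 => N /moment1 {}moment1.
have expand : box (fun _ => fun x : X N => nu N e x - 1) =
    \sum_(n : {ffun cube e -> bool}) sign n * (cube_moment N n - 1).
  have sum_sign : \sum_(n : {ffun cube e -> bool}) sign n = 0.
    by rewrite -(@prodrDr_expand _ _ (fun _ => 1)) (bigD1 (cube0 e)) //= subrr mul0r.
  under eq_bigr => n _ do rewrite mulrBr mulr1.
  rewrite sumrB sum_sign subr0; under eq_bigr => n _ do rewrite /cube_moment -avgMl.
  rewrite /box -avg_sumr; apply: eq_avg => p.
  rewrite prodrDr_expand; apply: eq_bigr => n _; rewrite /sign -big_split /=.
  by apply: eq_bigr => w _; case: (n w); rewrite ?mul1r ?mulr1.
rewrite expand; apply: le_trans (ler_norm_sum _ _ _) _.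
apply: (@le_trans _ _ (\sum_(n : {ffun cube e -> bool}) delta / cn)).
  apply: ler_sum => n _; rewrite normrM normr_prod big1 ?mul1r => [|w _]; first exact: moment1.
  by case: (n w); rewrite ?normrN normr1.
by rewrite sumr_const -mulr_natr mulfVK ?lt0r_neq0.
Qed.

(* Expanding [\prod_w (nu + 1)] reduces this to condition (iii) for each of
   the [2 ^ 2 ^ |e|] choices of exponents. *)
Lemma face_moment_bounded (m : nat) : exists C : R, exists N0, forall N, (N0 <= N)%N ->
  forall i : idx, avg (fun z => face_avg i (fun x : X N => nu N e x + 1) z ^+ m) <= C.
Proof.
have [_ [_ pr_iii]] := nu_pr.
pose T := {ffun cube e -> bool}.
pose moment (s : idx * T) N := avg (fun z : Ve V N (e :\ val s.1) * Ve V N (e :\ val s.1) =>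
  avg (fun a : V N (val s.1) * V N (val s.1) =>
    \prod_w nu N e (cubept (glue z.1 a.1) (glue z.2 a.2) w) ^+ s.2 w) ^+ m).
have [C [N0 momentC]] : exists C : R, exists N0, forall s N, (N0 <= N)%N -> moment s N <= C.
  apply: eventually_bounded_fin => -[i n].
  have [C [N0 iii]] := pr_iii e eH (val i) (valP i) n m.
  by exists C, N0 => N /iii; apply: le_trans; exact: ler_norm.
exists (#|T|%:R ^+ m * (#|T|%:R * C)), N0 => N /momentC {}momentC i.
under eq_avg => z do (rewrite /face_avg /cube_prod;
  under eq_avg => b do rewrite prodrDr_expand; rewrite avg_sumr).
apply: le_trans (ler_avg (fun z => exprn_sum_le ([ffun => false] : T) m _)) _.
  by move=> z n; apply: avg_ge0 => b; apply: prodr_ge0 => w _; case: (n w); rewrite ?nu_ge0.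
rewrite avgMl avg_sumr ler_wpM2l ?exprn_ge0 // mulr_natl -sumr_const.
apply: ler_sum => n _; apply: le_trans (momentC (i, n)); apply: ler_avg => z.
rewrite [Z in Z ^+ m <= _](eq_avg (g := fun b =>
  \prod_w nu N e (cubept (glue z.1 b.1) (glue z.2 b.2) w) ^+ n w)) // => b.
by apply: eq_bigr => w _; case: (n w).
Qed.

End Pseudorandom.

Theorem mainTheorem11 (R : realType) (J : finType) (V : nat -> J -> finType)
  (d : nat) (H : {set {set J}}) (nu : forall N (e : {set J}), Ve V N e -> R) :
  hypergraph_system V d H ->
  measure_system H nu ->
  pseudorandom H nu ->
  forall e : {set J}, e \in H ->
  forall m : nat, forall eps : R, 0 < eps ->
  exists N0 : nat, forall N : nat, (N0 <= N)%N ->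
  forall (K : finType), #|K| = m ->
  forall f : K -> Ve V N e -> R,
    (forall k x, `|f k x| <= nu N e x + 1) ->
    `|avg (fun x : Ve V N e => (nu N e x - 1) * \prod_(k : K) dual (f k) x)| <= eps.
Proof.
move=> [_ [Vne _]] [nu_ge0 _] nu_pr e eH m eps eps_gt0.
pose n := #|{: {k : J | k \in e}}|.
have [C [N1 face_bound]] := face_moment_bounded nu_pr eH (fun N x => nu_ge0 N e x eH) m.
pose Cb : R := 1 + m%:R * `|C|.
have Cb_ge1 : 1 <= Cb by rewrite lerDl mulr_ge0 ?ler0n.
pose delta : R := Num.min 1 (eps ^+ (2 ^ n) / Cb ^+ (2 ^ n).-1).
have delta_gt0 : 0 < delta by rewrite lt_min ltr01 divr_gt0 ?exprn_gt0 // (lt_le_trans ltr01).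
have [N2 small] := box_nu_sub1_small Vne nu_pr eH delta_gt0.
exists (maxn N1 N2) => N; rewrite geq_max => /andP[/face_bound {}face_bound /small {}small].
move=> K cardK f f_le; rewrite -(box_dual_family (Vne N)).
rewrite -(ler_pXn2r (expn_gt0 2 n)) ?nnegrE ?normr_ge0 ?(ltW eps_gt0) //.
apply: le_trans (box_GCS (delta := delta) (C := Cb) _ _ _) _.
- exact: le_trans Cb_ge1.
- by rewrite (box_dual_family_cube0 (Vne N)).
- move=> t; have [->|t_neq0] := eqVneq t (cube0 e).
    rewrite (box_dual_family_cube0 (Vne N)); apply: le_trans small _.
    by rewrite (le_trans _ Cb_ge1) // ge_min lexx.
  have /existsP[i ti] : [exists i, t i].
    by apply: contraR t_neq0 => /existsPn t0; apply/eqP/ffunP => i; rewrite ffunE; exact/negbTE.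
  have nu1_ge0 x : 0 <= nu N e x + 1 by rewrite addr_ge0 ?nu_ge0.
  apply: le_trans (norm_box_dual_family_le (Vne N) _ ti nu1_ge0 f_le) _.
  by rewrite cardK lerD2l ler_wpM2l ?ler0n // (le_trans (face_bound i)) ?ler_norm.
- by rewrite -ler_pdivlMr ?exprn_gt0 ?(lt_le_trans ltr01) // ge_min lexx orbT.
Qed.
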